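(* For $d\ge1$ let $X[n,d]=|\{i\in L_n(1):\ \deg_n(i)=d\}|$ be the number of vertices of degree $d$ in the first level of $T_n$. Then $X[n,1],X[n,2],\dots$ are asymptotically i.i.d. Poisson with mean $1$: for every $d\ge1$, the random vector $(X[n,1],\dots,X[n,d])$ converges in distribution, as $n\to\infty$, to a vector of $d$ independent Poisson random variables each with mean $1$.
   Context: Uniform random recursive tree: start at step $0$ with the tree $T_0$ consisting of the single vertex $0$ (the root). At step $n\ge1$, a vertex is chosen uniformly at random among the existing vertices $0,1,\dots,n-1$, independently of the past, and a new vertex $n$ is added and joined by an edge to the chosen vertex; $T_n$ is the resulting tree on vertices $0,\dots,n$. $\deg_n(i)$ is the degree of vertex $i$ in $T_n$, and $L_n(1)$ is the set of vertices of $T_n$ at graph distance $1$ from the root (the neighbours of $0$). *)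

From Stdlib Require Import Reals List Arith Bool.
Import ListNotations.
Open Scope R_scope.

(* A recursive tree T_n on vertices 0..n is encoded by its parent list
   t = [p_1; ...; p_n], where p_k < k is the vertex chosen at step k. *)
Definition parent (t : list nat) (k : nat) : nat := nth (k - 1) t 0%nat.

(* All recursive trees on n+1 vertices; each appears exactly once, and the
   uniform random recursive tree T_n is the uniform distribution on this list
   (each step chooses uniformly and independently among 0..k-1). *)
Fixpoint rrt (n : nat) : list (list nat) :=
  match n with
  | O => [[]]
  | S m => flat_map (fun t => map (fun p => t ++ [p]) (seq 0 (S m))) (rrt m)
  end.

Definition children_count (t : list nat) (i : nat) : nat :=
  length (filter (fun k => Nat.eqb (parent t k) i) (seq 1 (length t))).

Definition deg (t : list nat) (i : nat) : nat :=
  ((if Nat.eqb i 0 then 0 else 1) + children_count t i)%nat.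

Definition in_level1 (t : list nat) (i : nat) : bool :=
  Nat.leb 1 i && Nat.leb i (length t) && Nat.eqb (parent t i) 0.

Definition Xlev (t : list nat) (d : nat) : nat :=
  length (filter (fun i => in_level1 t i && Nat.eqb (deg t i) d)
                 (seq 0 (S (length t)))).

Definition prob (n : nat) (E : list nat -> bool) : R :=
  INR (length (filter E (rrt n))) / INR (length (rrt n)).

Definition poisson1_cdf (k : nat) : R :=
  sum_f_R0 (fun j => exp (-1) / INR (fact j)) k.

(* Method of factorial moments.  For a multi-index r = (r_1, ..., r_D) let
   E_n[r] = E prod_j (X[n,j])_(r_j).  Vertex n+1 attaches to the root (X[.,1] grows by one),
   to a level-1 vertex of degree j (one unit of X moves from j to j+1), or elsewhere (no change);
   in falling factorials this gives
     E_(n+1)[r] = E_n[r] (1 - |r|/(n+1))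
                  + (r_1 E_n[r - e_1] + sum_j r_(j+1) E_n[r + e_j - e_(j+1)]) / (n+1),
   with |r| = sum_j r_j.  The moments on the right have smaller weight sum_j j r_j, so by induction
   they tend to 1, hence so does E_n[r]: these are the factorial moments of independent Poisson(1)
   variables.  The recursion also gives 0 <= E_n[r] <= 1.  The distribution function is recovered
   one coordinate at a time from 1{x <= k} = sum_v c_k(v) (x)_v with
   c_k(v) = sum_(i <= k) (-1)^(v-i) / (i! (v-i)!); since sum_v |c_k(v)| < oo and the moments are
   bounded by 1, Tannery's theorem exchanges the limit with the sum. *)

From Stdlib Require Import Reals List Arith Bool Lia Lra FunctionalExtensionality.
Import ListNotations.
Local Open Scope nat_scope.

Fixpoint lsum {A} (l : list A) (h : A -> nat) : nat :=
  match l with [] => 0 | x :: l' => h x + lsum l' h end.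

Fixpoint lprod {A} (l : list A) (h : A -> nat) : nat :=
  match l with [] => 1 | x :: l' => h x * lprod l' h end.

Definition fupd (h : nat -> nat) (i v : nat) : nat -> nat :=
  fun j => if j =? i then v else h j.

Lemma fupd_eq h i v : fupd h i v i = v.
Proof. unfold fupd. now rewrite Nat.eqb_refl. Qed.

Lemma fupd_neq h i v j : j <> i -> fupd h i v j = h j.
Proof. intros H. unfold fupd. apply Nat.eqb_neq in H. now rewrite H. Qed.

Lemma fupd_agree h h' i v : (forall j, j <> i -> h j = h' j) -> fupd h i v = fupd h' i v.
Proof.
  intros H. apply functional_extensionality. intros j. unfold fupd.
  destruct (Nat.eqb_spec j i); auto.
Qed.

Lemma fupd2_agree h h' i i' v v' : (forall j, j <> i -> j <> i' -> h j = h' j) ->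
  fupd (fupd h i v) i' v' = fupd (fupd h' i v) i' v'.
Proof. intros H. apply fupd_agree. intros j Hj. unfold fupd. destruct (Nat.eqb_spec j i); auto. Qed.

Lemma fupd_mul h k v : (fun i => i * fupd h k v i) = fupd (fun i => i * h i) k (k * v).
Proof. apply functional_extensionality. intros i. unfold fupd. destruct (Nat.eqb_spec i k); now subst. Qed.

Section ListSums.
Context {A : Type}.
Implicit Types (l : list A) (h : A -> nat).

Lemma lsum_app l1 l2 h : lsum (l1 ++ l2) h = lsum l1 h + lsum l2 h.
Proof. induction l1; simpl; lia. Qed.

Lemma lsum_ext l h1 h2 : (forall x, In x l -> h1 x = h2 x) -> lsum l h1 = lsum l h2.
Proof. induction l; simpl; intros H; [reflexivity|]. f_equal; auto. Qed.

Lemma lsum_plus l h1 h2 : lsum l (fun x => h1 x + h2 x) = lsum l h1 + lsum l h2.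
Proof. induction l; simpl; lia. Qed.

Lemma lsum_mult_l l h c : lsum l (fun x => c * h x) = c * lsum l h.
Proof. induction l; simpl; nia. Qed.

Lemma lsum_mult_r l h c : lsum l (fun x => h x * c) = lsum l h * c.
Proof. induction l; simpl; nia. Qed.

Lemma lsum_const l c : lsum l (fun _ => c) = c * length l.
Proof. induction l; simpl; lia. Qed.

Lemma lsum_map {B} (l : list B) (f : B -> A) h : lsum (map f l) h = lsum l (fun x => h (f x)).
Proof. induction l; simpl; auto. Qed.

Lemma lsum_flat_map {B} (l : list B) (f : B -> list A) h :
  lsum (flat_map f l) h = lsum l (fun x => lsum (f x) h).
Proof. induction l; simpl; auto. now rewrite lsum_app, IHl. Qed.

Lemma length_filter_lsum l (P : A -> bool) :
  length (filter P l) = lsum l (fun x => if P x then 1 else 0).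
Proof. induction l; simpl; auto. destruct (P a); simpl; lia. Qed.

Lemma lsum_eq0 l h : lsum l h = 0 -> forall x, In x l -> h x = 0.
Proof. induction l; simpl; intros H x Hx; [destruct Hx|]. destruct Hx; subst; [lia|]. apply IHl; auto; lia. Qed.

Lemma lsum_neq0 l h : lsum l h <> 0 -> exists x, In x l /\ h x <> 0.
Proof.
  induction l; simpl; intros H; [lia|].
  destruct (Nat.eq_dec (h a) 0); [destruct IHl as [x [? ?]]; [lia|]|]; eauto.
Qed.

Lemma lprod_ext l h1 h2 : (forall x, In x l -> h1 x = h2 x) -> lprod l h1 = lprod l h2.
Proof. induction l; simpl; intros H; [reflexivity|]. f_equal; auto. Qed.

End ListSums.

Lemma lsum_swap {A B} (l : list A) (l' : list B) (h : A -> B -> nat) :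
  lsum l (fun x => lsum l' (h x)) = lsum l' (fun y => lsum l (fun x => h x y)).
Proof.
  induction l; simpl.
  - induction l'; simpl; lia.
  - now rewrite IHl, <- lsum_plus.
Qed.

Lemma lsum_fupd (l : list nat) h i : NoDup l -> In i l -> lsum l h = h i + lsum l (fupd h i 0).
Proof.
  induction l as [|a l IH]; simpl; intros ND Hi; [destruct Hi|]. inversion ND; subst.
  destruct Hi as [<-|Hi].
  - rewrite fupd_eq. f_equal. apply lsum_ext. intros x Hx. rewrite fupd_neq; congruence.
  - rewrite (IH H2 Hi), fupd_neq by congruence. lia.
Qed.

Lemma lsum_fupd_shift (l : list nat) h i v : NoDup l -> In i l ->
  lsum l (fupd h i v) + h i = lsum l h + v.
Proof.
  intros ND Hi. rewrite (lsum_fupd l h i ND Hi), (lsum_fupd l (fupd h i v) i ND Hi), fupd_eq.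
  replace (fupd (fupd h i v) i 0) with (fupd h i 0); [lia|].
  apply functional_extensionality. intros j. unfold fupd. now destruct (j =? i).
Qed.

Lemma lprod_fupd (l : list nat) h i : NoDup l -> In i l -> lprod l h = h i * lprod l (fupd h i 1).
Proof.
  induction l as [|a l IH]; simpl; intros ND Hi; [destruct Hi|]. inversion ND; subst.
  destruct Hi as [<-|Hi].
  - rewrite fupd_eq, Nat.mul_1_l. f_equal. apply lprod_ext. intros x Hx. rewrite fupd_neq; congruence.
  - rewrite (IH H2 Hi), fupd_neq by congruence. lia.
Qed.

Lemma lsum_seq_indicator (g : nat -> nat) q a n :
  lsum (seq a n) (fun j => if j =? q then g j else 0) = if (a <=? q) && (q <? a + n) then g q else 0.
Proof.
  revert a; induction n; intros a; simpl.
  - destruct (Nat.leb_spec a q), (Nat.ltb_spec q (a + 0)); simpl; lia.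
  - rewrite IHn. destruct (Nat.eqb_spec a q).
    + subst. rewrite Nat.leb_refl. replace (q <? q + S n) with true by (symmetry; apply Nat.ltb_lt; lia).
      replace (S q <=? q) with false by (symmetry; apply Nat.leb_gt; lia). simpl. lia.
    + destruct (Nat.leb_spec (S a) q), (Nat.leb_spec a q), (Nat.ltb_spec q (S a + n)),
        (Nat.ltb_spec q (a + S n)); simpl; lia.
Qed.

(** * Appending a vertex to a recursive tree *)

Lemma rrt_spec m t : In t (rrt m) -> length t = m /\ (forall x, In x t -> x < m).
Proof.
  revert t; induction m; simpl; intros t H.
  - destruct H as [<-|[]]. split; [reflexivity|intros x []].
  - apply in_flat_map in H as [t0 [H0 H1]].
    change (In t (map (fun p => t0 ++ [p]) (seq 0 (S m)))) in H1. apply in_map_iff in H1 as [p [<- Hp]].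
    apply IHm in H0 as [Len Bound]. apply in_seq in Hp.
    rewrite length_app; simpl; split; [lia|].
    intros x Hx. apply in_app_or in Hx as [Hx|[<-|[]]]; [apply Bound in Hx|]; lia.
Qed.

Lemma rrt_length m : length (rrt m) = fact m.
Proof.
  induction m; [reflexivity|]. cbn [rrt]. rewrite length_flat_map.
  rewrite (map_ext _ (fun _ => S m)) by (intros; now rewrite length_map, length_seq).
  transitivity (S m * length (rrt m)).
  - clear IHm. induction (rrt m); simpl; auto. rewrite IHl. lia.
  - rewrite IHm. reflexivity.
Qed.

Section AppendVertex.
Variables (t : list nat) (p : nat).

Lemma parent_app_old k : 1 <= k <= length t -> parent (t ++ [p]) k = parent t k.
Proof. intros H. unfold parent. rewrite app_nth1 by lia. reflexivity. Qed.

Lemma parent_app_new : parent (t ++ [p]) (S (length t)) = p.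
Proof. unfold parent. rewrite app_nth2 by lia. now replace (S (length t) - 1 - length t) with 0 by lia. Qed.

Lemma children_count_app i :
  children_count (t ++ [p]) i = children_count t i + (if p =? i then 1 else 0).
Proof.
  unfold children_count. rewrite length_app, Nat.add_1_r, seq_S, filter_app, length_app.
  f_equal.
  - f_equal. apply filter_ext_in. intros k Hk. apply in_seq in Hk. now rewrite parent_app_old by lia.
  - replace (1 + length t) with (S (length t)) by lia. simpl. rewrite parent_app_new.
    now destruct (p =? i).
Qed.

Lemma deg_app_old i : deg (t ++ [p]) i = deg t i + (if p =? i then 1 else 0).
Proof. unfold deg. rewrite children_count_app. lia. Qed.

Lemma in_level1_app_old i : i <= length t -> in_level1 (t ++ [p]) i = in_level1 t i.
Proof.
  intros H. unfold in_level1. rewrite length_app. simpl length.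
  destruct (Nat.leb_spec 1 i); simpl; auto.
  rewrite parent_app_old by lia.
  replace (i <=? length t + 1) with true by (symmetry; apply Nat.leb_le; lia).
  now replace (i <=? length t) with true by (symmetry; apply Nat.leb_le; lia).
Qed.

Lemma in_level1_app_new : in_level1 (t ++ [p]) (S (length t)) = (p =? 0).
Proof.
  unfold in_level1. rewrite length_app, parent_app_new. simpl length.
  now replace (S (length t) <=? length t + 1) with true by (symmetry; apply Nat.leb_le; lia).
Qed.

Hypothesis t_parents : forall x, In x t -> x < S (length t).

Lemma deg_app_new : p < S (length t) -> deg (t ++ [p]) (S (length t)) = 1.
Proof.
  intros Hp. unfold deg. rewrite children_count_app.
  replace (p =? S (length t)) with false by (symmetry; apply Nat.eqb_neq; lia).
  unfold children_count. rewrite (filter_ext_in _ (fun _ => false)), filter_false; [reflexivity|].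
  intros k Hk. apply in_seq in Hk. apply Nat.eqb_neq.
  enough (parent t k < S (length t)) by lia.
  apply t_parents, nth_In. lia.
Qed.

End AppendVertex.

Lemma in_level1_deg_pos t i : in_level1 t i = true -> 1 <= deg t i.
Proof. unfold in_level1, deg. destruct i; simpl; [discriminate|lia]. Qed.

Lemma length_filter_except (l : list nat) (P P' : nat -> bool) p : NoDup l -> In p l ->
  (forall i, In i l -> i <> p -> P' i = P i) ->
  length (filter P' l) + (if P p then 1 else 0) = length (filter P l) + (if P' p then 1 else 0).
Proof.
  induction l as [|a l IH]; simpl; intros ND Hp Hagree; [destruct Hp|]. inversion ND; subst.
  destruct (Nat.eq_dec a p) as [<-|Hap].
  - rewrite (filter_ext_in P' P l) by (intros i Hi; apply Hagree; [now right|congruence]).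
    destruct (P a), (P' a); simpl; lia.
  - destruct Hp as [|Hp]; [contradiction|].
    rewrite Hagree by auto.
    specialize (IH H2 Hp (fun i Hi => Hagree i (or_intror Hi))). destruct (P a); simpl; lia.
Qed.

(* The new vertex n+1 has degree 1 and lies in level 1 iff p = 0; the only old vertex
   whose degree changes is p itself. *)
Lemma Xlev_app t p j : (forall x, In x t -> x < S (length t)) -> p <= length t ->
  Xlev (t ++ [p]) j + (if in_level1 t p && (deg t p =? j) then 1 else 0)
  = Xlev t j + (if (p =? 0) && (j =? 1) then 1 else 0)
    + (if in_level1 t p && (S (deg t p) =? j) then 1 else 0).
Proof.
  intros Ht Hp. unfold Xlev. rewrite length_app. simpl (length [p]).
  rewrite Nat.add_1_r, (seq_S (S (length t)) 0), filter_app, length_app.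
  assert (Enew : length (filter (fun i => in_level1 (t ++ [p]) i && (deg (t ++ [p]) i =? j))
                                [0 + S (length t)]) = if (p =? 0) && (j =? 1) then 1 else 0).
  { cbn [filter Nat.add]. rewrite in_level1_app_new, deg_app_new, (Nat.eqb_sym 1 j) by (auto; lia).
    now destruct ((p =? 0) && (j =? 1)). }
  rewrite Enew.
  rewrite (filter_ext_in _ (fun i => in_level1 t i && (deg t i + (if p =? i then 1 else 0) =? j))).
  2:{ intros i Hi. apply in_seq in Hi. now rewrite in_level1_app_old, deg_app_old by lia. }
  pose proof (length_filter_except (seq 0 (S (length t))) (fun i => in_level1 t i && (deg t i =? j))
     (fun i => in_level1 t i && (deg t i + (if p =? i then 1 else 0) =? j)) p) as E.
  cbv beta in E. rewrite Nat.eqb_refl, Nat.add_1_r in E.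
  enough (Hagree : forall i, In i (seq 0 (S (length t))) -> i <> p ->
    in_level1 t i && (deg t i + (if p =? i then 1 else 0) =? j) = in_level1 t i && (deg t i =? j)).
  { specialize (E (seq_NoDup _ _) ltac:(apply in_seq; lia) Hagree). lia. }
  intros i _ Hi. apply not_eq_sym, Nat.eqb_neq in Hi. now rewrite Hi, Nat.add_0_r.
Qed.

Definition step_up (q : nat) (x : nat -> nat) : nat -> nat :=
  fupd (fupd x q (x q - 1)) (S q) (S (x (S q))).

Lemma Xlev_app_root t j : (forall x, In x t -> x < S (length t)) -> 1 <= j ->
  Xlev (t ++ [0]) j = fupd (Xlev t) 1 (S (Xlev t 1)) j.
Proof.
  intros Ht Hj. pose proof (Xlev_app t 0 j Ht ltac:(lia)) as E.
  unfold in_level1 in E. simpl in E. unfold fupd.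
  destruct (Nat.eqb_spec j 1); subst; simpl in E; lia.
Qed.

Lemma Xlev_app_nonroot t p j : (forall x, In x t -> x < S (length t)) -> 1 <= p <= length t -> 1 <= j ->
  Xlev (t ++ [p]) j = (if in_level1 t p then step_up (deg t p) (Xlev t) else Xlev t) j.
Proof.
  intros Ht Hp Hj. pose proof (Xlev_app t p j Ht ltac:(lia)) as E.
  replace (p =? 0) with false in E by (symmetry; apply Nat.eqb_neq; lia).
  destruct (in_level1 t p) eqn:L; cbn [andb] in E; [|lia].
  pose proof (in_level1_deg_pos _ _ L). unfold step_up, fupd.
  destruct (Nat.eqb_spec j (S (deg t p))), (Nat.eqb_spec j (deg t p)),
    (Nat.eqb_spec (deg t p) j), (Nat.eqb_spec (S (deg t p)) j); cbv iota in E |- *; try subst j; lia.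
Qed.

(** * Falling factorials *)

Fixpoint ffact (x r : nat) : nat :=
  match r with 0 => 1 | S r' => x * ffact (x - 1) r' end.

Lemma ffact_small x r : x < r -> ffact x r = 0.
Proof. revert x; induction r; intros x H; [lia|]. simpl. destruct x; [lia|]. rewrite IHr by lia. lia. Qed.

Lemma ffact_S x r : ffact x (S r) = ffact x r * (x - r).
Proof.
  revert x; induction r; intros x; simpl; [lia|].
  change (x * ffact (x - 1) (S r) = x * ffact (x - 1) r * (x - S r)).
  rewrite IHr. replace (x - 1 - r) with (x - S r) by lia. lia.
Qed.

Lemma ffact_mul x r : x * ffact x r = ffact x (S r) + r * ffact x r.
Proof. rewrite ffact_S. destruct (Nat.le_gt_cases r x); [nia|]. rewrite ffact_small by lia. lia. Qed.

Lemma ffact_Sx y s : ffact (S y) s = ffact y s + s * ffact y (s - 1).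
Proof.
  destruct s as [|s]; simpl; [lia|]. rewrite !Nat.sub_0_r.
  change (y * ffact (y - 1) s) with (ffact y (S s)). rewrite ffact_S.
  destruct (Nat.le_gt_cases s y).
  - replace y with ((y - s) + s) at 2 by lia. set (u := y - s). ring.
  - rewrite ffact_small by lia. lia.
Qed.

Lemma ffact_absorb x a : x * ffact (x - 1) a + a * ffact x a = x * ffact x a.
Proof. change (x * ffact (x - 1) a) with (ffact x (S a)). rewrite ffact_mul. lia. Qed.

Lemma ffact_transfer x y a b :
  x * ffact (x - 1) a * ffact (S y) b + a * (ffact x a * ffact y b)
  = x * (ffact x a * ffact y b) + b * (ffact x (S a) * ffact y (b - 1)).
Proof.
  change (x * ffact (x - 1) a) with (ffact x (S a)).
  rewrite ffact_Sx, (Nat.mul_assoc x), ffact_mul. ring.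
Qed.

Definition ffact_prod (D : nat) (r x : nat -> nat) : nat :=
  lprod (seq 1 D) (fun j => ffact (x j) (r j)).

Definition order (D : nat) (r : nat -> nat) : nat := lsum (seq 1 D) r.

Definition weight (D : nat) (r : nat -> nat) : nat := lsum (seq 1 D) (fun j => j * r j).

(* The truncated subtractions below are harmless: these indices only occur with coefficient
   r 1, resp. r (S j). *)
Definition drop_first (r : nat -> nat) : nat -> nat := fupd r 1 (r 1 - 1).

Definition step_down (j : nat) (r : nat -> nat) : nat -> nat :=
  fupd (fupd r j (S (r j))) (S j) (r (S j) - 1).

Section OrderWeight.
Variable D : nat.

Lemma order_split r : 1 <= D -> order D r = r 1 + lsum (seq 1 (D - 1)) (fun j => r (S j)).
Proof.
  intros HD. unfold order. replace D with (S (D - 1)) at 1 by lia. cbn [seq lsum].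
  now rewrite <- seq_shift, lsum_map.
Qed.

Lemma drop_first_order_weight r : 1 <= D -> 1 <= r 1 ->
  order D (drop_first r) + 1 = order D r /\ weight D (drop_first r) + 1 = weight D r.
Proof.
  intros HD H1. assert (I1 : In 1 (seq 1 D)) by (apply in_seq; lia).
  unfold order, weight, drop_first. rewrite fupd_mul.
  pose proof (lsum_fupd_shift _ r 1 (r 1 - 1) (seq_NoDup _ _) I1).
  pose proof (lsum_fupd_shift _ (fun i => i * r i) 1 (1 * (r 1 - 1)) (seq_NoDup _ _) I1).
  cbv beta in *. split; lia.
Qed.

Lemma step_down_order_weight r j : 1 <= j -> S j <= D -> 1 <= r (S j) ->
  order D (step_down j r) = order D r /\ weight D (step_down j r) + 1 = weight D r.
Proof.
  intros H1 H2 H3. unfold order, weight, step_down. rewrite !fupd_mul.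
  assert (I1 : In j (seq 1 D)) by (apply in_seq; lia).
  assert (I2 : In (S j) (seq 1 D)) by (apply in_seq; lia).
  pose proof (lsum_fupd_shift _ (fupd r j (S (r j))) (S j) (r (S j) - 1) (seq_NoDup _ _) I2).
  pose proof (lsum_fupd_shift _ r j (S (r j)) (seq_NoDup _ _) I1).
  pose proof (lsum_fupd_shift _ (fupd (fun i => i * r i) j (j * S (r j))) (S j)
                (S j * (r (S j) - 1)) (seq_NoDup _ _) I2).
  pose proof (lsum_fupd_shift _ (fun i => i * r i) j (j * S (r j)) (seq_NoDup _ _) I1).
  rewrite !fupd_neq in * by lia. cbv beta in *. split; nia.
Qed.

End OrderWeight.

Section FfactProd.
Variable D : nat.

Lemma ffact_prod_ext r x x' : (forall j, 1 <= j <= D -> x j = x' j) ->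
  ffact_prod D r x = ffact_prod D r x'.
Proof. intros H. apply lprod_ext. intros j Hj. apply in_seq in Hj. rewrite H by lia. reflexivity. Qed.

Lemma ffact_prod_split r x i : 1 <= i <= D ->
  ffact_prod D r x = ffact (x i) (r i) * lprod (seq 1 D) (fupd (fun j => ffact (x j) (r j)) i 1).
Proof. intros H. apply (lprod_fupd _ (fun j => ffact (x j) (r j))); [apply seq_NoDup|apply in_seq; lia]. Qed.

Lemma ffact_prod_split2 r x i : 1 <= i -> S i <= D ->
  ffact_prod D r x = ffact (x i) (r i) * ffact (x (S i)) (r (S i))
    * lprod (seq 1 D) (fupd (fupd (fun j => ffact (x j) (r j)) i 1) (S i) 1).
Proof.
  intros H1 H2. rewrite (ffact_prod_split r x i) by lia.
  rewrite (lprod_fupd _ _ (S i)) by (apply seq_NoDup || (apply in_seq; lia)).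
  rewrite fupd_neq by lia. lia.
Qed.

Lemma ffact_prod_order0 r x : order D r = 0 -> ffact_prod D r x = 1.
Proof.
  intros H. unfold ffact_prod. rewrite (lprod_ext _ _ (fun _ => 1)).
  - clear. induction (seq 1 D); simpl; lia.
  - intros j Hj. now rewrite (lsum_eq0 _ _ H j Hj).
Qed.

Lemma ffact_prod_zero r : order D r <> 0 -> ffact_prod D r (fun _ => 0) = 0.
Proof.
  intros H. destruct (lsum_neq0 _ _ H) as [j [Hj Hr]]. apply in_seq in Hj.
  rewrite (ffact_prod_split r _ j), ffact_small by lia. lia.
Qed.

Lemma ffact_prod_fupd r x c v : 1 <= c <= D -> r c = 0 ->
  ffact_prod D (fupd r c v) x = ffact (x c) v * ffact_prod D r x.
Proof.
  intros Hc Hr. rewrite !(ffact_prod_split _ x c), fupd_eq, Hr by lia.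
  rewrite (fupd_agree (fun j => ffact (x j) (fupd r c v j)) (fun j => ffact (x j) (r j)))
    by (intros; now rewrite fupd_neq).
  simpl. lia.
Qed.

Lemma ffact_prod_root r x : 1 <= D ->
  ffact_prod D r (fupd x 1 (S (x 1))) = ffact_prod D r x + r 1 * ffact_prod D (drop_first r) x.
Proof.
  intros HD. rewrite !(ffact_prod_split _ _ 1) by lia. unfold drop_first. rewrite !fupd_eq.
  rewrite (fupd_agree (fun j => ffact (fupd x 1 (S (x 1)) j) (r j)) (fun j => ffact (x j) (r j)))
    by (intros; now rewrite fupd_neq).
  rewrite (fupd_agree (fun j => ffact (x j) (fupd r 1 (r 1 - 1) j)) (fun j => ffact (x j) (r j)))
    by (intros; now rewrite fupd_neq).
  rewrite ffact_Sx. nia.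
Qed.

Lemma ffact_prod_step_up r x j : 1 <= j -> S j <= D ->
  x j * ffact_prod D r (step_up j x) + r j * ffact_prod D r x
  = x j * ffact_prod D r x + r (S j) * ffact_prod D (step_down j r) x.
Proof.
  intros H1 H2. rewrite !(ffact_prod_split2 _ _ j) by lia.
  unfold step_up, step_down. rewrite !fupd_eq, !(fupd_neq _ (S j) _ j), !fupd_eq by lia.
  rewrite (fupd2_agree (fun i => ffact (fupd (fupd x j (x j - 1)) (S j) (S (x (S j))) i) (r i))
             (fun i => ffact (x i) (r i))) by (intros; now rewrite !fupd_neq).
  rewrite (fupd2_agree (fun i => ffact (x i) (fupd (fupd r j (S (r j))) (S j) (r (S j) - 1) i))
             (fun i => ffact (x i) (r i))) by (intros; now rewrite !fupd_neq).
  set (rest := lprod _ _).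
  pose proof (ffact_transfer (x j) (x (S j)) (r j) (r (S j))) as E.
  nia.
Qed.

Lemma ffact_prod_step_up_last r x : 1 <= D ->
  x D * ffact_prod D r (step_up D x) + r D * ffact_prod D r x = x D * ffact_prod D r x.
Proof.
  intros HD. rewrite !(ffact_prod_split _ _ D) by lia.
  unfold step_up. rewrite fupd_neq, fupd_eq by lia.
  set (rest := lprod _ (fupd (fun i => ffact (x i) (r i)) D 1)).
  replace (lprod _ _) with rest.
  2:{ apply lprod_ext. intros i Hi. apply in_seq in Hi. unfold fupd.
      destruct (Nat.eqb_spec i D), (Nat.eqb_spec i (S D)); [reflexivity..|lia|reflexivity]. }
  pose proof (ffact_absorb (x D) (r D)). nia.
Qed.

End FfactProd.

(** * The recursion for factorial moments *)

Definition key_count (l : list nat) (key : nat -> nat) (j : nat) : nat :=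
  length (filter (fun p => key p =? j) l).

Lemma lsum_by_key (l : list nat) (key G : nat -> nat) D B :
  (forall j, ~ (1 <= j <= D) -> G j = B) ->
  exists c, c + lsum (seq 1 D) (key_count l key) = length l /\
  lsum l (fun p => G (key p)) = lsum (seq 1 D) (fun j => key_count l key j * G j) + c * B.
Proof.
  intros HG. induction l as [|p l IH].
  - exists 0. unfold key_count. simpl. rewrite lsum_const. lia.
  - destruct IH as [c [H1 H2]].
    assert (E : forall h, lsum (seq 1 D) (fun j => key_count (p :: l) key j * h j)
        = lsum (seq 1 D) (fun j => key_count l key j * h j)
          + lsum (seq 1 D) (fun j => if j =? key p then h j else 0)).
    { intros h. rewrite <- lsum_plus. apply lsum_ext. intros j _. unfold key_count. simpl.
      rewrite (Nat.eqb_sym (key p) j). destruct (j =? key p); simpl; lia. }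
    pose proof (E (fun _ => 1)) as E1. rewrite lsum_seq_indicator in E1.
    rewrite (lsum_ext _ (fun j => key_count (p :: l) key j * 1) (key_count (p :: l) key)),
      (lsum_ext _ (fun j => key_count l key j * 1) (key_count l key)) in E1 by (intros; lia).
    rewrite E, lsum_seq_indicator. cbn [length lsum].
    destruct (Nat.leb_spec 1 (key p)), (Nat.ltb_spec (key p) (1 + D)); cbn [andb] in *.
    + exists c. split; lia.
    + exists (S c). rewrite HG by lia. split; lia.
    + exists (S c). rewrite HG by lia. split; lia.
    + exists (S c). rewrite HG by lia. split; lia.
Qed.

Definition level1_degree (t : list nat) (p : nat) : nat := if in_level1 t p then deg t p else 0.

Lemma key_count_level1_degree t j : 1 <= j ->
  key_count (seq 1 (length t)) (level1_degree t) j = Xlev t j.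
Proof.
  intros Hj. unfold key_count, Xlev. cbn [seq filter].
  replace (in_level1 t 0) with false by reflexivity. cbn [andb].
  apply f_equal, filter_ext. intros p. unfold level1_degree.
  destruct (in_level1 t p); [reflexivity|]. apply Nat.eqb_neq. lia.
Qed.

(* The three terms: attaching to the root, to a level-1 vertex of degree j <= D, and to the
   c remaining vertices, which leaves X unchanged on 1..D. *)
Lemma sum_attach D r t m : In t (rrt m) ->
  exists c, c + lsum (seq 1 D) (Xlev t) = m /\
  lsum (seq 0 (S m)) (fun p => ffact_prod D r (Xlev (t ++ [p])))
  = ffact_prod D r (fupd (Xlev t) 1 (S (Xlev t 1)))
    + lsum (seq 1 D) (fun j => Xlev t j * ffact_prod D r (step_up j (Xlev t)))
    + c * ffact_prod D r (Xlev t).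
Proof.
  intros Hin. destruct (rrt_spec _ _ Hin) as [Lt Bt].
  assert (Ht : forall x, In x t -> x < S (length t)) by (intros x Hx; specialize (Bt x Hx); lia).
  set (X := Xlev t).
  set (G := fun j => if (1 <=? j) && (j <=? D) then ffact_prod D r (step_up j X) else ffact_prod D r X).
  destruct (lsum_by_key (seq 1 m) (level1_degree t) G D (ffact_prod D r X)) as [c [H1 H2]].
  { intros j Hj. unfold G. destruct (Nat.leb_spec 1 j), (Nat.leb_spec j D); simpl; auto; lia. }
  assert (Hcount : forall j, In j (seq 1 D) -> key_count (seq 1 m) (level1_degree t) j = X j).
  { intros j Hj. apply in_seq in Hj. subst m. apply key_count_level1_degree. lia. }
  exists c. rewrite length_seq, (lsum_ext _ _ X Hcount) in H1. split; [exact H1|].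
  cbn [seq lsum].
  rewrite (ffact_prod_ext D r _ (fupd X 1 (S (X 1)))) by (intros; apply Xlev_app_root; auto; lia).
  rewrite (lsum_ext _ _ (fun p => G (level1_degree t p))).
  2:{ intros p Hp. apply in_seq in Hp.
      rewrite (ffact_prod_ext D r _ (if in_level1 t p then step_up (deg t p) X else X))
        by (intros; apply Xlev_app_nonroot; auto; lia).
      unfold G, level1_degree. destruct (in_level1 t p) eqn:L; [|reflexivity].
      pose proof (in_level1_deg_pos _ _ L). destruct (Nat.leb_spec 1 (deg t p)); [|lia].
      destruct (Nat.leb_spec (deg t p) D); simpl; auto.
      apply ffact_prod_ext. intros j Hj. unfold step_up, fupd.
      destruct (Nat.eqb_spec j (S (deg t p))), (Nat.eqb_spec j (deg t p)); auto; lia. }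
  rewrite H2.
  rewrite (lsum_ext _ (fun j => key_count _ _ j * G j) (fun j => X j * ffact_prod D r (step_up j X))).
  2:{ intros j Hj. rewrite Hcount by auto. apply in_seq in Hj. unfold G.
      destruct (Nat.leb_spec 1 j), (Nat.leb_spec j D); simpl; auto; lia. }
  lia.
Qed.

Lemma sum_attach_ffact_prod D r t m : 1 <= D -> In t (rrt m) ->
  lsum (seq 0 (S m)) (fun p => ffact_prod D r (Xlev (t ++ [p]))) + order D r * ffact_prod D r (Xlev t)
  = S m * ffact_prod D r (Xlev t) + r 1 * ffact_prod D (drop_first r) (Xlev t)
    + lsum (seq 1 (D - 1)) (fun j => r (S j) * ffact_prod D (step_down j r) (Xlev t)).
Proof.
  intros HD Hin. destruct (sum_attach D r t m Hin) as [c [H1 ->]].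
  rewrite ffact_prod_root by lia. set (X := Xlev t) in *.
  assert (K : lsum (seq 1 D) (fun j => X j * ffact_prod D r (step_up j X) + r j * ffact_prod D r X)
    = lsum (seq 1 D) (fun j => X j * ffact_prod D r X)
      + lsum (seq 1 (D - 1)) (fun j => r (S j) * ffact_prod D (step_down j r) X)).
  { assert (Hs : seq 1 D = seq 1 (D - 1) ++ [D]).
    { replace D with (S (D - 1)) at 1 by lia. rewrite seq_S. do 2 f_equal. lia. }
    rewrite Hs, !lsum_app.
    rewrite (lsum_ext (seq 1 (D - 1)) _
               (fun j => X j * ffact_prod D r X + r (S j) * ffact_prod D (step_down j r) X)).
    2:{ intros j Hj. apply in_seq in Hj. apply ffact_prod_step_up; lia. }
    rewrite lsum_plus. cbn [lsum]. rewrite <- (ffact_prod_step_up_last D r X) by lia. lia. }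
  rewrite lsum_plus, !lsum_mult_r in K. unfold order. rewrite <- H1. nia.
Qed.

Definition moment_sum (D : nat) (r : nat -> nat) (m : nat) : nat :=
  lsum (rrt m) (fun t => ffact_prod D r (Xlev t)).

Lemma moment_sum_rec D r m : 1 <= D ->
  moment_sum D r (S m) + order D r * moment_sum D r m
  = S m * moment_sum D r m + r 1 * moment_sum D (drop_first r) m
    + lsum (seq 1 (D - 1)) (fun j => r (S j) * moment_sum D (step_down j r) m).
Proof.
  intros HD. unfold moment_sum. cbn [rrt]. rewrite lsum_flat_map.
  rewrite (lsum_ext _ _ (fun t => lsum (seq 0 (S m)) (fun p => ffact_prod D r (Xlev (t ++ [p]))))).
  2:{ intros t _. now rewrite lsum_map. }
  rewrite <- !lsum_mult_l, <- lsum_plus.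
  rewrite (lsum_ext _ _ (fun t => S m * ffact_prod D r (Xlev t) + r 1 * ffact_prod D (drop_first r) (Xlev t)
    + lsum (seq 1 (D - 1)) (fun j => r (S j) * ffact_prod D (step_down j r) (Xlev t))))
    by (intros; now apply sum_attach_ffact_prod).
  rewrite !lsum_plus, lsum_swap. f_equal. apply lsum_ext. intros j _. apply lsum_mult_l.
Qed.

Local Open Scope R_scope.

Fixpoint Rlsum {A} (l : list A) (h : A -> R) : R :=
  match l with [] => 0 | x :: l' => h x + Rlsum l' h end.

Fixpoint Rlprod {A} (l : list A) (h : A -> R) : R :=
  match l with [] => 1 | x :: l' => h x * Rlprod l' h end.

Section RealListSums.
Context {A : Type}.
Implicit Types (l : list A) (h : A -> R).

Lemma INR_lsum l (h : A -> nat) : INR (lsum l h) = Rlsum l (fun x => INR (h x)).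
Proof. induction l; simpl; auto. now rewrite plus_INR, IHl. Qed.

Lemma Rlsum_ext l h1 h2 : (forall x, In x l -> h1 x = h2 x) -> Rlsum l h1 = Rlsum l h2.
Proof. induction l; simpl; intros H; [reflexivity|]. rewrite H, IHl; auto. Qed.

Lemma Rlsum_le l h1 h2 : (forall x, In x l -> h1 x <= h2 x) -> Rlsum l h1 <= Rlsum l h2.
Proof.
  induction l; simpl; intros H; [lra|].
  apply Rplus_le_compat; [apply H; now left|apply IHl; intros; apply H; now right].
Qed.

Lemma Rlsum_zero l h : (forall x, In x l -> h x = 0) -> Rlsum l h = 0.
Proof. induction l; simpl; intros H; [reflexivity|]. rewrite H, IHl; auto; lra. Qed.

Lemma Rlsum_nonneg l h : (forall x, In x l -> 0 <= h x) -> 0 <= Rlsum l h.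
Proof. intros H. rewrite <- (Rlsum_zero l (fun _ => 0)) by auto. now apply Rlsum_le. Qed.

Lemma Rlsum_plus l h1 h2 : Rlsum l (fun x => h1 x + h2 x) = Rlsum l h1 + Rlsum l h2.
Proof. induction l; simpl; [ring|]. rewrite IHl. ring. Qed.

Lemma Rlsum_mult_l l h c : Rlsum l (fun x => c * h x) = c * Rlsum l h.
Proof. induction l; simpl; [ring|]. rewrite IHl. ring. Qed.

Lemma Rlsum_div l h c : Rlsum l (fun x => h x / c) = Rlsum l h / c.
Proof. induction l; simpl; unfold Rdiv in *; [ring|]. rewrite IHl. ring. Qed.

Lemma Rlsum_opp l h : Rlsum l (fun x => - h x) = - Rlsum l h.
Proof. induction l; simpl; [ring|]. rewrite IHl. ring. Qed.

Lemma Rlsum_app l1 l2 h : Rlsum (l1 ++ l2) h = Rlsum l1 h + Rlsum l2 h.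
Proof. induction l1; simpl; [ring|]. rewrite IHl1. ring. Qed.

Lemma Rlsum_map {B} (l : list B) (f : B -> A) h : Rlsum (map f l) h = Rlsum l (fun x => h (f x)).
Proof. induction l; simpl; auto. now rewrite IHl. Qed.

Lemma Rabs_Rlsum l h : Rabs (Rlsum l h) <= Rlsum l (fun x => Rabs (h x)).
Proof. induction l; simpl; [rewrite Rabs_R0; lra|]. eapply Rle_trans; [apply Rabs_triang|]. lra. Qed.

End RealListSums.

Lemma Rlsum_swap {A B} (l : list A) (l' : list B) (h : A -> B -> R) :
  Rlsum l (fun x => Rlsum l' (h x)) = Rlsum l' (fun y => Rlsum l (fun x => h x y)).
Proof.
  induction l; simpl.
  - rewrite Rlsum_zero; auto.
  - now rewrite IHl, <- Rlsum_plus.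
Qed.

Lemma Rlsum_seq_sum_f (h : nat -> R) n : Rlsum (seq 0 (S n)) h = sum_f_R0 h n.
Proof. induction n; [simpl; ring|]. rewrite seq_S, Rlsum_app, IHn. simpl. ring. Qed.

Lemma Rlsum_seq_offset (h : nat -> R) a b n :
  Rlsum (seq (a + b) n) h = Rlsum (seq b n) (fun i => h (a + i)%nat).
Proof. revert b; induction n; intros b; simpl; [reflexivity|]. now rewrite <- IHn, Nat.add_succ_r. Qed.

Lemma Rlsum_seq_split (h : nat -> R) V M : (V <= M)%nat ->
  Rlsum (seq 0 M) h = Rlsum (seq 0 V) h + Rlsum (seq V (M - V)) h.
Proof. intros H. replace M with (V + (M - V))%nat at 1 by lia. now rewrite seq_app, Rlsum_app. Qed.

Lemma cv_const c : Un_cv (fun _ => c) c.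
Proof. intros eps He. exists 0%nat. intros. unfold Rdist. rewrite Rminus_diag, Rabs_R0. lra. Qed.

Lemma cv_ext (u v : nat -> R) l : (forall m, u m = v m) -> Un_cv u l -> Un_cv v l.
Proof. intros E H eps He. destruct (H eps He) as [N HN]. exists N. intros. rewrite <- E. auto. Qed.

Lemma cv_Rlsum {A} (l : list A) (u : A -> nat -> R) (L : A -> R) :
  (forall x, In x l -> Un_cv (u x) (L x)) -> Un_cv (fun m => Rlsum l (fun x => u x m)) (Rlsum l L).
Proof.
  induction l; simpl; intros H; [apply cv_const|].
  apply CV_plus; auto.
Qed.

Lemma cv_scal_nat (c : nat) (g : nat -> R) : ((1 <= c)%nat -> Un_cv g 1) -> Un_cv (fun m => INR c * g m) (INR c).
Proof.
  intros H. destruct c.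
  - apply (cv_ext (fun _ => 0)); [intros; simpl; ring|apply cv_const].
  - pose proof (CV_mult _ _ _ _ (cv_const (INR (S c))) (H ltac:(lia))) as Hc.
    now rewrite Rmult_1_r in Hc.
Qed.

Lemma cv_Rabs_le1 (w : nat -> R) l : Un_cv w l -> (forall n, Rabs (w n) <= 1) -> Rabs l <= 1.
Proof.
  intros H Hb. destruct (Rle_lt_dec (Rabs l) 1) as [|Hlt]; auto.
  destruct (H (Rabs l - 1)) as [N HN]; [lra|]. specialize (HN N (le_n N)). unfold Rdist in HN.
  specialize (Hb N). pose proof (Rabs_triang_inv l (w N)). rewrite Rabs_minus_sym in HN. lra.
Qed.

Lemma relaxation_step (am bm K : R) (m : nat) (e : R) : 1 <= K <= INR (S m) -> Rabs (bm - K) < e ->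
  INR (S m) * Rabs (am * (1 - K / INR (S m)) + bm / INR (S m) - 1) <= INR m * Rabs (am - 1) + e.
Proof.
  intros HK Hb. rewrite S_INR in *.
  assert (E : am * (1 - K / (INR m + 1)) + bm / (INR m + 1) - 1
              = ((am - 1) * (INR m + 1 - K) + (bm - K)) / (INR m + 1)) by (field; lra).
  rewrite E. unfold Rdiv. rewrite Rabs_mult, Rabs_inv, (Rabs_right (INR m + 1)) by lra.
  field_simplify; [|lra].
  eapply Rle_trans; [apply Rabs_triang|]. rewrite Rabs_mult, (Rabs_right (INR m + 1 - K)) by lra.
  pose proof (Rabs_pos (am - 1)). nra.
Qed.

Lemma linear_growth (g : nat -> R) M e : (forall m, (M <= m)%nat -> g (S m) <= g m + e) ->
  forall n, g (n + M)%nat <= g M + INR n * e.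
Proof.
  intros Hg. induction n; [simpl; lra|]. rewrite S_INR. cbn [Nat.add].
  eapply Rle_trans; [apply Hg; lia|]. lra.
Qed.

(* By relaxation_step, m |a_m - 1| eventually grows by less than any eps per step, so it is o(m). *)
Lemma cv_relaxation (a b : nat -> R) (k : nat) : (1 <= k)%nat ->
  (forall m, a (S m) = a m * (1 - INR k / INR (S m)) + b m / INR (S m)) ->
  Un_cv b (INR k) -> Un_cv a 1.
Proof.
  intros Hk Hrec Hb eps Heps.
  assert (HK : 1 <= INR k) by (apply (le_INR 1); lia).
  destruct (Hb (eps / 2)) as [N1 HN1]; [lra|].
  set (M := Nat.max N1 k).
  set (g := fun m => INR m * Rabs (a m - 1)).
  assert (Hg : forall m, (M <= m)%nat -> g (S m) <= g m + eps / 2).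
  { intros m Hm. unfold g. rewrite Hrec. apply relaxation_step; [split; auto|apply HN1; lia].
    apply le_INR. lia. }
  destruct (INR_archimed (eps / 2) (g M)) as [N2 HN2]; [lra|].
  exists (Nat.max (S M) N2). intros n Hn. unfold Rdist.
  pose proof (linear_growth g M _ Hg (n - M)) as Hlin. replace (n - M + M)%nat with n in Hlin by lia.
  assert (Hn0 : 0 < INR n) by (apply lt_0_INR; lia).
  assert (INR (n - M) * (eps / 2) <= INR n * (eps / 2)) by (apply Rmult_le_compat_r; [lra|apply le_INR; lia]).
  assert (INR N2 * (eps / 2) <= INR n * (eps / 2)) by (apply Rmult_le_compat_r; [lra|apply le_INR; lia]).
  apply (Rmult_lt_reg_l (INR n)); [lra|]. change (g n < INR n * eps). lra.
Qed.

(** * Convergence of the factorial moments *)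

(* rrt m lists the m! equally likely trees, so this is E[prod_j (X[m,j])_(r_j)]. *)
Definition fmoment (D : nat) (r : nat -> nat) (m : nat) : R :=
  INR (moment_sum D r m) / INR (fact m).

Definition inflow (D : nat) (r : nat -> nat) (m : nat) : R :=
  INR (r 1%nat) * fmoment D (drop_first r) m
  + Rlsum (seq 1 (D - 1)) (fun j => INR (r (S j)) * fmoment D (step_down j r) m).

Section Moments.
Variable D : nat.
Hypothesis D_pos : (1 <= D)%nat.

Lemma fmoment_rec r m :
  fmoment D r (S m) = fmoment D r m * (1 - INR (order D r) / INR (S m)) + inflow D r m / INR (S m).
Proof.
  pose proof (f_equal INR (moment_sum_rec D r m D_pos)) as E.
  rewrite !plus_INR, !mult_INR, INR_lsum in E.
  rewrite (Rlsum_ext _ _ (fun j => INR (r (S j)) * INR (moment_sum D (step_down j r) m))) in E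
    by (intros; apply mult_INR).
  unfold inflow, fmoment.
  rewrite (Rlsum_ext _ _ (fun j => INR (r (S j)) * INR (moment_sum D (step_down j r) m) / INR (fact m)))
    by (intros; unfold Rdiv; ring).
  rewrite Rlsum_div. change (fact (S m)) with (S m * fact m)%nat. rewrite mult_INR.
  assert (F0 := INR_fact_neq_0 m).
  assert (S0 : INR (S m) <> 0) by (apply not_0_INR; lia).
  apply (Rmult_eq_reg_l (INR (S m) * INR (fact m))); [|now apply Rmult_integral_contrapositive].
  field_simplify; auto. lra.
Qed.

Lemma fmoment_nonneg r m : 0 <= fmoment D r m.
Proof. apply Rmult_le_pos; [apply pos_INR|apply Rlt_le, Rinv_0_lt_compat, INR_fact_lt_0]. Qed.

Lemma fmoment_order0 r m : order D r = 0%nat -> fmoment D r m = 1.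
Proof.
  intros H. unfold fmoment, moment_sum.
  rewrite (lsum_ext _ _ (fun _ => 1%nat)) by (intros; now apply ffact_prod_order0).
  rewrite lsum_const, rrt_length, Nat.mul_1_l. field. apply INR_fact_neq_0.
Qed.

Lemma fmoment_init r : fmoment D r 0 = if (order D r =? 0)%nat then 1 else 0.
Proof.
  destruct (Nat.eqb_spec (order D r) 0) as [E|E]; [now apply fmoment_order0|].
  unfold fmoment, moment_sum. cbn [rrt lsum].
  rewrite (ffact_prod_ext D r _ (fun _ => 0%nat)), ffact_prod_zero by auto. simpl. lra.
Qed.

Lemma inflow_le_order r m : (forall r', fmoment D r' m <= 1) -> inflow D r m <= INR (order D r).
Proof.
  intros H1. unfold inflow. rewrite (order_split D r D_pos), plus_INR, INR_lsum.
  apply Rplus_le_compat; [|apply Rlsum_le; intros j _];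
    [pose proof (pos_INR (r 1%nat)); pose proof (H1 (drop_first r))
    |pose proof (pos_INR (r (S j))); pose proof (H1 (step_down j r))]; nra.
Qed.

Lemma inflow_eq0 r m : (forall r', (m < order D r')%nat -> fmoment D r' m = 0) ->
  (S m < order D r)%nat -> inflow D r m = 0.
Proof.
  intros H0 Hr. unfold inflow. rewrite Rlsum_zero; [|intros j Hj; apply in_seq in Hj].
  - destruct (Nat.eq_dec (r 1%nat) 0) as [->|E]; [simpl; ring|].
    destruct (drop_first_order_weight D r D_pos) as [W _]; [lia|]. rewrite H0 by lia. ring.
  - destruct (Nat.eq_dec (r (S j)) 0) as [->|E]; [simpl; ring|].
    destruct (step_down_order_weight D r j) as [W _]; try lia. rewrite H0 by lia. ring.
Qed.

Lemma relaxation_le1 (a b K : R) (n : nat) : 0 <= a <= 1 -> b <= K -> 0 <= K <= INR (S n) ->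
  a * (1 - K / INR (S n)) + b / INR (S n) <= 1.
Proof.
  intros Ha Hb HK. assert (S0 : 0 < INR (S n)) by (apply lt_0_INR; lia).
  apply (Rmult_le_reg_l (INR (S n))); [lra|].
  replace (INR (S n) * (a * (1 - K / INR (S n)) + b / INR (S n))) with (a * (INR (S n) - K) + b)
    by (field; lra).
  nra.
Qed.

Lemma fmoment_bound m : forall r, fmoment D r m <= 1 /\ ((m < order D r)%nat -> fmoment D r m = 0).
Proof.
  induction m; intros r.
  - rewrite fmoment_init. destruct (Nat.eqb_spec (order D r) 0); split; lra || lia.
  - rewrite fmoment_rec.
    destruct (Nat.le_gt_cases (order D r) (S m)) as [Hle|Hgt].
    + split; [|lia]. apply relaxation_le1; [split; [apply fmoment_nonneg|apply IHm]| |split].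
      * apply inflow_le_order. intros; apply IHm.
      * apply pos_INR.
      * now apply le_INR.
    + rewrite inflow_eq0, (proj2 (IHm r)) by (lia || (intros; now apply IHm)). split; intros; lra.
Qed.

Lemma fmoment_cv r : Un_cv (fmoment D r) 1.
Proof.
  remember (weight D r) as w eqn:Hw. revert r Hw.
  induction w as [w IH] using lt_wf_ind. intros r Hw.
  destruct (Nat.eq_dec (order D r) 0) as [E|E].
  { apply (cv_ext (fun _ => 1)); [intros; symmetry; now apply fmoment_order0|apply cv_const]. }
  apply (cv_relaxation (fmoment D r) (inflow D r) (order D r)); [lia|apply fmoment_rec|].
  unfold inflow. rewrite (order_split D r D_pos), plus_INR, INR_lsum.
  apply CV_plus.
  - apply cv_scal_nat. intros H1. destruct (drop_first_order_weight D r D_pos H1).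
    apply (IH (weight D (drop_first r))); lia.
  - apply (cv_Rlsum _ (fun j m => INR (r (S j)) * fmoment D (step_down j r) m)).
    intros j Hj. apply in_seq in Hj. apply cv_scal_nat. intros H1.
    destruct (step_down_order_weight D r j); try lia.
    apply (IH (weight D (step_down j r))); lia.
Qed.

End Moments.

(** * Inverting factorial moments *)

(* With s = -1 these are the coefficients of the inversion formula
   P(X = x) = sum_v poisson_coef (-1) x v E[(X)_v]; with s = 1 they give a summable majorant. *)
Definition poisson_coef (s : R) (x v : nat) : R :=
  if (x <=? v)%nat then s ^ (v - x) / (INR (fact x) * INR (fact (v - x))) else 0.

Lemma poisson_coef_rec x u :
  INR (S u) * poisson_coef (-1) x (S u)
  = - poisson_coef (-1) x u + match x with O => 0 | S x' => poisson_coef (-1) x' u end.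
Proof.
  unfold poisson_coef. assert (F := INR_fact_neq_0).
  assert (fact_S : forall n, INR (fact (S n)) = INR (S n) * INR (fact n)) by (intros; apply mult_INR).
  destruct (Nat.leb_spec x (S u)), (Nat.leb_spec x u).
  - destruct x as [|x'].
    + rewrite !Nat.sub_0_r. change ((-1) ^ S u) with (-1 * (-1) ^ u). rewrite fact_S.
      assert (INR (S u) <> 0) by (apply not_0_INR; lia). field. auto.
    + destruct (Nat.leb_spec x' u); [|lia].
      replace (S u - S x')%nat with (u - x')%nat by lia.
      replace (u - x')%nat with (S (u - S x')) by lia.
      set (w := (u - S x')%nat). assert (Hu : u = (w + S x')%nat) by lia.
      change ((-1) ^ S w) with (-1 * (-1) ^ w).
      rewrite !fact_S, Hu, !S_INR, plus_INR, S_INR.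
      pose proof (pos_INR w). pose proof (pos_INR x'). field. repeat split; auto; lra.
  - assert (x = S u) by lia. subst x. rewrite Nat.sub_diag, Nat.leb_refl, Nat.sub_diag.
    rewrite fact_S. assert (INR (S u) <> 0) by (apply not_0_INR; lia). simpl. field. auto.
  - lia.
  - destruct x as [|x']; [lia|]. destruct (Nat.leb_spec x' u); [lia|]. ring.
Qed.

Definition inversion_sum (M X x : nat) : R :=
  Rlsum (seq 0 M) (fun v => poisson_coef (-1) x v * INR (ffact X v)).

Lemma inversion_sum_val X : forall M x, (X < M)%nat ->
  inversion_sum M X x = if (X =? x)%nat then 1 else 0.
Proof.
  induction X as [|X IH]; intros M x HM.
  - destruct M as [|M]; [lia|]. unfold inversion_sum. cbn [seq Rlsum].
    rewrite Rlsum_zero by (intros v Hv; apply in_seq in Hv; destruct v; [lia|]; simpl; ring).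
    unfold poisson_coef. destruct x; simpl; [field|ring].
  - unfold inversion_sum.
    rewrite (Rlsum_ext _ _ (fun v => poisson_coef (-1) x v * INR (ffact X v)
                                    + INR v * poisson_coef (-1) x v * INR (ffact X (v - 1))))
      by (intros; rewrite ffact_Sx, plus_INR, mult_INR; ring).
    rewrite Rlsum_plus. fold (inversion_sum M X x). rewrite IH by lia.
    destruct M as [|M]; [lia|]. cbn [seq Rlsum]. rewrite <- seq_shift, Rlsum_map.
    rewrite (Rlsum_ext _ _ (fun u => - (poisson_coef (-1) x u * INR (ffact X u))
               + (match x with O => 0 | S x' => poisson_coef (-1) x' u end) * INR (ffact X u))).
    2:{ intros u _. replace (S u - 1)%nat with u by lia. rewrite poisson_coef_rec. ring. }
    rewrite Rlsum_plus, Rlsum_opp. fold (inversion_sum M X x). rewrite IH by lia.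
    destruct x as [|x'].
    + rewrite Rlsum_zero by (intros; ring). simpl. destruct (X =? 0)%nat; lra.
    + fold (inversion_sum M X x'). rewrite IH by lia. simpl.
      destruct (Nat.eqb_spec X (S x')), (Nat.eqb_spec X x'); lia || lra.
Qed.

Definition cdf_coef (k v : nat) : R := Rlsum (seq 0 (S k)) (fun x => poisson_coef (-1) x v).

Definition cdf_coef_bound (k v : nat) : R := Rlsum (seq 0 (S k)) (fun x => poisson_coef 1 x v).

Lemma cdf_coef_inversion k X M : (X < M)%nat ->
  Rlsum (seq 0 M) (fun v => cdf_coef k v * INR (ffact X v)) = if (X <=? k)%nat then 1 else 0.
Proof.
  intros H. unfold cdf_coef.
  rewrite (Rlsum_ext _ _ (fun v => Rlsum (seq 0 (S k)) (fun x => poisson_coef (-1) x v * INR (ffact X v)))).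
  2:{ intros v _. rewrite Rmult_comm, <- Rlsum_mult_l. apply Rlsum_ext. intros; ring. }
  rewrite Rlsum_swap, (Rlsum_ext _ _ (fun x => INR (if (x =? X)%nat then 1%nat else 0%nat))).
  2:{ intros x _. fold (inversion_sum M X x). rewrite inversion_sum_val, Nat.eqb_sym by auto.
      now destruct (x =? X)%nat. }
  rewrite <- INR_lsum, (lsum_seq_indicator (fun _ => 1%nat)).
  destruct (Nat.leb_spec X k), (Nat.ltb_spec X (0 + S k)); simpl; auto; lia.
Qed.

Lemma exp_partial_sums (s : R) : Un_cv (fun n => Rlsum (seq 0 n) (fun i => s ^ i / INR (fact i))) (exp s).
Proof.
  apply (CV_shift _ 1). apply (cv_ext (E1 s)); [|apply E1_cvg].
  intros n. rewrite Nat.add_1_r, Rlsum_seq_sum_f. apply sum_eq. intros; unfold Rdiv; ring.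
Qed.

Lemma poisson_coef_series (s : R) x :
  Un_cv (fun M => Rlsum (seq 0 M) (poisson_coef s x)) (/ INR (fact x) * exp s).
Proof.
  apply (CV_shift _ x).
  apply (cv_ext (fun n => / INR (fact x) * Rlsum (seq 0 n) (fun i => s ^ i / INR (fact i)))).
  2:{ apply CV_mult; [apply cv_const|apply exp_partial_sums]. }
  intros n. symmetry. rewrite Nat.add_comm, seq_app, Rlsum_app, Rlsum_zero, Rplus_0_l, <- Rlsum_mult_l.
  - replace (0 + x)%nat with (x + 0)%nat by lia. rewrite Rlsum_seq_offset. apply Rlsum_ext. intros i _.
    unfold poisson_coef. rewrite (proj2 (Nat.leb_le x (x + i))), Nat.add_comm, Nat.add_sub by lia.
    field. split; apply INR_fact_neq_0.
  - intros v Hv. apply in_seq in Hv. unfold poisson_coef.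
    now rewrite (proj2 (Nat.leb_gt x v)) by lia.
Qed.

Lemma cdf_coef_sum_series (s : R) k :
  Un_cv (fun M => Rlsum (seq 0 M) (fun v => Rlsum (seq 0 (S k)) (fun x => poisson_coef s x v)))
        (Rlsum (seq 0 (S k)) (fun x => / INR (fact x) * exp s)).
Proof.
  apply (cv_ext (fun M => Rlsum (seq 0 (S k)) (fun x => Rlsum (seq 0 M) (poisson_coef s x))));
    [intros; apply Rlsum_swap|].
  apply (cv_Rlsum _ (fun x M => Rlsum (seq 0 M) (poisson_coef s x))). intros. apply poisson_coef_series.
Qed.

Lemma cdf_coef_series k : Un_cv (fun M => Rlsum (seq 0 M) (cdf_coef k)) (poisson1_cdf k).
Proof.
  unfold poisson1_cdf. rewrite <- Rlsum_seq_sum_f.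
  rewrite (Rlsum_ext _ _ (fun x => / INR (fact x) * exp (-1))) by (intros; unfold Rdiv; ring).
  apply cdf_coef_sum_series.
Qed.

Lemma cdf_coef_bound_series k : exists B, Un_cv (fun M => Rlsum (seq 0 M) (cdf_coef_bound k)) B.
Proof. eexists. apply cdf_coef_sum_series. Qed.

Lemma Rabs_cdf_coef k v : Rabs (cdf_coef k v) <= cdf_coef_bound k v.
Proof.
  eapply Rle_trans; [apply Rabs_Rlsum|]. apply Rlsum_le. intros x _.
  unfold poisson_coef. destruct (x <=? v)%nat; [|rewrite Rabs_R0; lra].
  unfold Rdiv. rewrite Rabs_mult, pow_1_abs, pow1, Rabs_right; [lra|].
  apply Rle_ge, Rlt_le, Rinv_0_lt_compat, Rmult_lt_0_compat; apply INR_fact_lt_0.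
Qed.

Lemma series_tail_small (b : nat -> R) B : Un_cv (fun M => Rlsum (seq 0 M) b) B ->
  forall e, 0 < e -> exists V, forall M, (V <= M)%nat -> Rabs (Rlsum (seq V (M - V)) b) < e.
Proof.
  intros Hb e He. destruct (Hb (e / 2)) as [V HV]; [lra|]. exists V. intros M HM.
  pose proof (HV M HM) as H1. pose proof (HV V (le_n V)) as H2. unfold Rdist in H1, H2.
  rewrite (Rlsum_seq_split _ V M HM) in H1.
  apply Rabs_def2 in H1. apply Rabs_def2 in H2. apply Rabs_def1; lra.
Qed.

Lemma tail_dominated (b g : nat -> R) V M e : (forall v, Rabs (g v) <= b v) ->
  Rabs (Rlsum (seq V (M - V)) b) < e -> Rabs (Rlsum (seq V (M - V)) g) < e.
Proof.
  intros Hg Hb. eapply Rle_lt_trans; [apply Rabs_Rlsum|].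
  eapply Rle_lt_trans; [apply Rlsum_le; intros v _; apply Hg|]. eapply Rle_lt_trans; [apply Rle_abs|exact Hb].
Qed.

Lemma tannery (a b : nat -> R) (Sa B l : R) (u : nat -> nat -> R) (Mn : nat -> nat) :
  (forall v, Rabs (a v) <= b v) ->
  Un_cv (fun M => Rlsum (seq 0 M) b) B ->
  Un_cv (fun M => Rlsum (seq 0 M) a) Sa ->
  (forall n v, Rabs (u n v) <= 1) ->
  (forall v, Un_cv (fun n => u n v) l) -> Rabs l <= 1 ->
  (forall n, (n <= Mn n)%nat) ->
  Un_cv (fun n => Rlsum (seq 0 (Mn n)) (fun v => a v * u n v)) (Sa * l).
Proof.
  intros Hab Hb Ha Hu Hul Hl HM eps Heps. set (e := eps / 5).
  destruct (series_tail_small b B Hb e) as [V Htail]; [unfold e; lra|].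
  assert (HSa : Rabs (Sa - Rlsum (seq 0 V) a) <= 2 * e).
  { destruct (Ha e) as [N1 HN1]; [unfold e; lra|].
    pose proof (HN1 (Nat.max N1 V) ltac:(lia)) as H1. unfold Rdist in H1.
    rewrite (Rlsum_seq_split _ V) in H1 by lia.
    pose proof (tail_dominated b a V (Nat.max N1 V) e Hab (Htail (Nat.max N1 V) ltac:(lia))) as H2.
    apply Rabs_def2 in H1. apply Rabs_def2 in H2. apply Rabs_le. lra. }
  assert (Hfin : Un_cv (fun n => Rlsum (seq 0 V) (fun v => a v * u n v)) (Rlsum (seq 0 V) a * l)).
  { rewrite Rmult_comm, <- Rlsum_mult_l.
    apply (cv_Rlsum _ (fun v n => a v * u n v)). intros v _.
    rewrite Rmult_comm. apply CV_mult; [apply cv_const|auto]. }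
  destruct (Hfin e) as [N0 HN0]; [unfold e; lra|].
  exists (Nat.max N0 V). intros n Hn. unfold Rdist.
  rewrite (Rlsum_seq_split _ V (Mn n)) by (specialize (HM n); lia).
  pose proof (HN0 n ltac:(lia)) as H1. unfold Rdist in H1.
  assert (H2 : Rabs (Rlsum (seq V (Mn n - V)) (fun v => a v * u n v)) < e).
  { apply (tail_dominated b); [|apply Htail; specialize (HM n); lia].
    intros v. rewrite Rabs_mult. specialize (Hu n v). specialize (Hab v).
    pose proof (Rabs_pos (a v)). nra. }
  assert (H3 : Rabs ((Rlsum (seq 0 V) a - Sa) * l) < 3 * e).
  { apply (Rle_lt_trans _ (2 * e)); [|unfold e; lra]. rewrite Rabs_mult, Rabs_minus_sym. pose proof (Rabs_pos l).
    pose proof (Rabs_pos (Sa - Rlsum (seq 0 V) a)). nra. }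
  apply Rabs_def2 in H1. apply Rabs_def2 in H2. apply Rabs_def2 in H3. apply Rabs_def1; unfold e in *; lra.
Qed.

(** * The joint distribution function *)

Definition below (k : nat -> nat) (t : list nat) (c : nat) : R :=
  if (Xlev t c <=? k c)%nat then 1 else 0.

Definition cdf_moment (D : nat) (k : nat -> nat) (cs : list nat) (r : nat -> nat) (n : nat) : R :=
  Rlsum (rrt n) (fun t => INR (ffact_prod D r (Xlev t)) * Rlprod cs (below k t)) / INR (fact n).

Lemma Rlprod_below_bound k t cs : 0 <= Rlprod cs (below k t) <= 1.
Proof.
  induction cs as [|c cs IH]; simpl; [lra|].
  assert (below k t c = 0 \/ below k t c = 1) as [-> | ->]
    by (unfold below; destruct (Xlev t c <=? k c)%nat; auto).
  all: split; lra.
Qed.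

Lemma Xlev_le_length t j : (Xlev t j <= S (length t))%nat.
Proof. unfold Xlev. rewrite <- (length_seq (S (length t)) 0) at 2. apply filter_length_le. Qed.

Section CdfMoments.
Variables (D : nat) (k : nat -> nat).
Hypothesis D_pos : (1 <= D)%nat.

Lemma cdf_moment_bound cs r n : Rabs (cdf_moment D k cs r n) <= 1.
Proof.
  assert (H : 0 <= cdf_moment D k cs r n <= fmoment D r n).
  { unfold cdf_moment, fmoment, moment_sum. rewrite INR_lsum. unfold Rdiv.
    pose proof (Rinv_0_lt_compat _ (INR_fact_lt_0 n)).
    split; (apply Rmult_le_compat_r; [lra|]) || (apply Rmult_le_pos; [|lra]).
    - apply Rlsum_nonneg. intros t _.
      pose proof (Rlprod_below_bound k t cs). pose proof (pos_INR (ffact_prod D r (Xlev t))). nra.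
    - apply Rlsum_le. intros t _.
      pose proof (Rlprod_below_bound k t cs). pose proof (pos_INR (ffact_prod D r (Xlev t))). nra. }
  destruct (fmoment_bound D D_pos n r). rewrite Rabs_right; lra.
Qed.

Lemma cdf_moment_nil r n : cdf_moment D k [] r n = fmoment D r n.
Proof.
  unfold cdf_moment, fmoment, moment_sum. rewrite INR_lsum. f_equal.
  apply Rlsum_ext. intros; simpl; ring.
Qed.

(* Expand the indicator 1{X[n,c] <= k c} in falling factorials of X[n,c]; since r c = 0 these
   fold into the moment vector. *)
Lemma cdf_moment_cons c cs r n : (1 <= c <= D)%nat -> r c = 0%nat ->
  cdf_moment D k (c :: cs) r n
  = Rlsum (seq 0 (S (S n))) (fun v => cdf_coef (k c) v * cdf_moment D k cs (fupd r c v) n).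
Proof.
  intros Hc Hr. unfold cdf_moment.
  rewrite (Rlsum_ext _ _ (fun v => Rlsum (rrt n) (fun t => cdf_coef (k c) v
             * (INR (ffact_prod D (fupd r c v) (Xlev t)) * Rlprod cs (below k t))) / INR (fact n)))
    by (intros; rewrite Rlsum_mult_l; unfold Rdiv; ring).
  rewrite Rlsum_div, Rlsum_swap. f_equal. apply Rlsum_ext. intros t Ht.
  cbn [Rlprod]. unfold below at 1. destruct (rrt_spec _ _ Ht) as [Lt _].
  rewrite <- (cdf_coef_inversion (k c) (Xlev t c) (S (S n))) by (pose proof (Xlev_le_length t c); lia).
  symmetry. rewrite (Rlsum_ext _ _ (fun v => INR (ffact_prod D r (Xlev t)) * Rlprod cs (below k t)
                                   * (cdf_coef (k c) v * INR (ffact (Xlev t c) v)))).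
  - rewrite Rlsum_mult_l. ring.
  - intros v _. rewrite ffact_prod_fupd, mult_INR by auto. ring.
Qed.

Lemma cdf_moment_cv cs : NoDup cs -> (forall c, In c cs -> (1 <= c <= D)%nat) ->
  forall r, (forall c, In c cs -> r c = 0%nat) ->
  Un_cv (cdf_moment D k cs r) (Rlprod cs (fun c => poisson1_cdf (k c))).
Proof.
  induction cs as [|c cs IH]; intros ND Hcs r Hr.
  - apply (cv_ext (fmoment D r)); [intros; now rewrite cdf_moment_nil|]. now apply fmoment_cv.
  - inversion ND as [|? ? Hc ND']; subst. cbn [Rlprod].
    apply (cv_ext (fun n => Rlsum (seq 0 (S (S n))) (fun v => cdf_coef (k c) v * cdf_moment D k cs (fupd r c v) n))).
    { intros n. rewrite cdf_moment_cons; auto; [apply Hcs|apply Hr]; now left. }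
    assert (IHv : forall v, Un_cv (cdf_moment D k cs (fupd r c v)) (Rlprod cs (fun c => poisson1_cdf (k c)))).
    { intros v. apply IH; auto; [intros; apply Hcs; now right|].
      intros c' Hc'. rewrite fupd_neq by congruence. apply Hr. now right. }
    destruct (cdf_coef_bound_series (k c)) as [B HB].
    apply (tannery _ (cdf_coef_bound (k c)) _ B); auto.
    + apply Rabs_cdf_coef.
    + apply cdf_coef_series.
    + intros; apply cdf_moment_bound.
    + apply (cv_Rabs_le1 _ _ (IHv 0%nat)). intros; apply cdf_moment_bound.
Qed.

End CdfMoments.

Lemma INR_forallb_Rlprod (l : list nat) (P : nat -> bool) :
  INR (if forallb P l then 1%nat else 0%nat) = Rlprod l (fun i => if P i then 1 else 0).
Proof. induction l; simpl; auto. destruct (P a); simpl; [rewrite <- IHl; ring|ring]. Qed.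

Lemma Rlprod_fold_right (l : list nat) h : Rlprod l h = fold_right Rmult 1 (map h l).
Proof. induction l; simpl; auto. now rewrite IHl. Qed.

Theorem theorem3p1 :
  forall d : nat, (1 <= d)%nat ->
  forall k : nat -> nat,
    Un_cv
      (fun n => prob n (fun t => forallb (fun i => Nat.leb (Xlev t i) (k i)) (seq 1 d)))
      (fold_right Rmult 1 (map (fun i => poisson1_cdf (k i)) (seq 1 d))).
Proof.
  intros d Hd k. rewrite <- Rlprod_fold_right.
  apply (cv_ext (cdf_moment d k (seq 1 d) (fun _ => 0%nat))).
  2:{ apply (cdf_moment_cv d k Hd); auto using seq_NoDup. intros c Hc. apply in_seq in Hc. lia. }
  intros n. unfold cdf_moment, prob. rewrite rrt_length, length_filter_lsum, INR_lsum. f_equal.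
  apply Rlsum_ext. intros t _.
  rewrite ffact_prod_order0, INR_forallb_Rlprod by (unfold order; now rewrite lsum_const).
  simpl INR. now rewrite Rmult_1_l.
Qed.
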